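(* Let $O$ be a total order of cardinality $\aleph$ (finite or infinite), and let $\alpha(\aleph)$ be the least ordinal of cardinality $\aleph$. Then $O$ has a strict binary questionable representation of length at most $\alpha(\aleph)+1$; more precisely, there is an order embedding of $O$ into $\mathrm{Next}(1,\alpha(\aleph)+1,(O^{0,1})_{\alpha(\aleph)+1})$ in which any two distinct images have a question.
   Context: Orders are partial orders (strict relation $<$); for elements $x,y$ we write $x\sim y$ when $x\neq y$ and neither $x<y$ nor $y<x$. $O^{0,1}$ denotes the two-element total order $0<1$. For an ordinal $j$, a sequence of orders $\mathcal O_j=(O_k)_{k<j}$ is indexed by the ordinals $k<j$; $(O')_j$ denotes the constant sequence with all items equal to $O'$. For an ordinal $\ell\le j$, a word of length $\ell$ over $\mathcal O_j$ is a sequence $X=(x_k)_{k<\ell}$ with $x_k\in\mathrm{Dom}(O_k)$. For two words $X,Y$, if there is a least ordinal $k<\min(\mathrm{len}X,\mathrm{len}Y)$ with $x_k\ne y_k$, then $(k,x_k,y_k)$ is the question of $X,Y$; otherwise $X,Y$ have no question. For ordinals $i<j$, $\mathrm{Next}(i,j,\mathcal O_j)$ is the partial order whose domain is the set of all words over $\mathcal O_j$ of length $\ell$ with $i\le\ell<j$, where $X<Y$ iff $X,Y$ have a question $(k,x_k,y_k)$ with $x_k<y_k$ in $O_k$; words with no question, or whose question has $x_k\sim y_k$ in $O_k$, are incomparable. A questionable representation of an order $O$ is an injective map $f$ from $\mathrm{Dom}(O)$ into $\mathrm{Dom}(\mathrm{Next}(i,j,\mathcal O_j))$ (for some $i<j$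 and $\mathcal O_j$) such that for all $x,y$: $f(x)<f(y)$ iff $x<y$ (so incomparability is also preserved). Its length is $j$, its width is the supremum of the cardinalities of the $\mathrm{Dom}(O_k)$, $k<j$. It is strict if any two distinct images have a question, total if every $O_k$ is a total order, and binary if it is total of width 2. *)

From Stdlib Require Import Relations Wellfounded.
Set Implicit Arguments.

Definition strict_order (T : Type) (lt : T -> T -> Prop) : Prop :=
  (forall x, ~ lt x x) /\ (forall x y z, lt x y -> lt y z -> lt x z).

Definition total_order (T : Type) (lt : T -> T -> Prop) : Prop :=
  strict_order lt /\ (forall x y, x <> y -> lt x y \/ lt y x).

Definition well_order (I : Type) (lt : I -> I -> Prop) : Prop :=
  total_order lt /\ well_founded lt.

Definition equinumerous (I T : Type) : Prop :=
  exists (f : I -> T) (g : T -> I),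
    (forall x, g (f x) = x) /\ (forall y, f (g y) = y).

(* The well-order (I, ltI) is an initial ordinal: every proper initial
   segment {k | k < i} has strictly smaller cardinality than I, i.e. there
   is no injection of I into {k | k < i}.  Together with [equinumerous I T],
   (I, ltI) is (isomorphic to) alpha(aleph), aleph = |T|. *)
Definition initial_ordinal (I : Type) (ltI : I -> I -> Prop) : Prop :=
  forall i : I, ~ exists g : I -> I,
      (forall a b, g a = g b -> a = b) /\ (forall k, ltI (g k) i).

(* Words over (O^{0,1})_{alpha+1}, alpha being represented by (I, ltI).
   Positions k < alpha+1 of interest are the elements of I (words have
   length <= alpha).  A length l with l <= alpha is encoded as [option I]:
   [Some i] is the length i (positions k < i), [None] is the length alpha
   (all positions of I).  Letters are booleans (false = 0 < 1 = true);
   letters at positions >= length are irrelevant. *)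
Definition word (I : Type) : Type := (option I * (I -> bool))%type.

Definition below (I : Type) (ltI : I -> I -> Prop) (l : option I) (k : I)
  : Prop :=
  match l with Some i => ltI k i | None => True end.

(* Length l satisfies 1 <= l (l <= alpha < alpha+1 holds by encoding). *)
Definition word_in_Next1 (I : Type) (ltI : I -> I -> Prop) (w : word I)
  : Prop :=
  exists k, below ltI (fst w) k.

Definition is_question (I : Type) (ltI : I -> I -> Prop) (X Y : word I)
  (k : I) : Prop :=
  below ltI (fst X) k /\ below ltI (fst Y) k /\ snd X k <> snd Y k /\
  (forall j, ltI j k -> snd X j = snd Y j).

Definition has_question (I : Type) (ltI : I -> I -> Prop) (X Y : word I)
  : Prop := exists k, is_question ltI X Y k.

Definition next_lt (I : Type) (ltI : I -> I -> Prop) (X Y : word I)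
  : Prop :=
  exists k, is_question ltI X Y k /\ snd X k = false /\ snd Y k = true.

From Stdlib Require Import Classical ClassicalEpsilon.

Set Implicit Arguments.
Unset Strict Implicit.

(* Enumerate T as (e k)_{k in I}.  The word of x has full length alpha and
   letter 1 at k exactly when e k <= x: it is the characteristic function of
   the down-set of x, read along the enumeration.  For x < y the first
   position where the words of x and y differ carries some e k with
   x < e k <= y, so the words compare as x and y do; such a position exists
   because the enumeration reaches y.  Only surjectivity of the enumeration
   and well-foundedness of the index order are used, so the initiality of
   alpha plays no role. *)

Definition truth (P : Prop) : bool :=
  if excluded_middle_informative P then true else false.

Lemma truth_true (P : Prop) : truth P = true <-> P.
Proof.
  unfold truth; destruct (excluded_middle_informative P); split; intros;
    tauto || discriminate.
Qed.

Lemma truth_false (P : Prop) : truth P = false <-> ~ P.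
Proof.
  unfold truth; destruct (excluded_middle_informative P); split; intros;
    tauto || discriminate.
Qed.

Lemma wf_least (I : Type) (ltI : I -> I -> Prop) (P : I -> Prop) :
  well_founded ltI -> forall k0, P k0 ->
  exists k, P k /\ forall j, ltI j k -> ~ P j.
Proof.
  intros wf k0 Pk0. apply NNPP; intros no_least.
  assert (never : forall k, ~ P k).
  { intro k. induction k as [k IH] using (well_founded_ind wf).
    intro Pk. apply no_least. exists k. split; assumption. }
  exact (never k0 Pk0).
Qed.

Lemma is_question_sym (I : Type) (ltI : I -> I -> Prop) (X Y : word I) k :
  is_question ltI X Y k -> is_question ltI Y X k.
Proof.
  intros (HX & HY & Hk & Hbelow). repeat split; try assumption.
  - intro E; apply Hk; symmetry; exact E.
  - intros j Hj; symmetry; apply Hbelow; exact Hj.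
Qed.

Section CutWords.

Variables (T : Type) (lt : T -> T -> Prop).
Hypothesis lt_total : total_order lt.

Variables (I : Type) (ltI : I -> I -> Prop).
Hypothesis ltI_wf : well_founded ltI.

Variable e : I -> T.
Hypothesis e_onto : forall y, exists k, e k = y.

Definition lte (x y : T) : Prop := lt x y \/ x = y.

Definition cut (x : T) (k : I) : bool := truth (lte (e k) x).

Definition cut_word (x : T) : word I := (None, cut x).

Lemma lte_lt_trans x y z : lte x y -> lt y z -> lt x z.
Proof.
  destruct lt_total as [[_ lt_trans] _].
  intros [Hxy | <-] Hyz; [exact (lt_trans _ _ _ Hxy Hyz) | exact Hyz].
Qed.

Lemma lt_lte_trans x y z : lt x y -> lte y z -> lt x z.
Proof.
  destruct lt_total as [[_ lt_trans] _].
  intros Hxy [Hyz | <-]; [exact (lt_trans _ _ _ Hxy Hyz) | exact Hxy].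
Qed.

Lemma not_lte_of_lt x y : lt x y -> ~ lte y x.
Proof.
  destruct lt_total as [[lt_irr _] _].
  intros Hxy Hyx. exact (lt_irr y (lte_lt_trans Hyx Hxy)).
Qed.

Lemma lt_of_not_lte x y : ~ lte y x -> lt x y.
Proof.
  destruct lt_total as [_ lt_tot]. intros Hyx.
  destruct (classic (x = y)) as [-> | Hne].
  - exfalso; apply Hyx; right; reflexivity.
  - destruct (lt_tot x y Hne) as [H | H];
      [exact H | exfalso; apply Hyx; left; exact H].
Qed.

Lemma cut_monotone x y k : lt x y -> cut x k = true -> cut y k = true.
Proof.
  unfold cut. intros Hxy Hx. apply (proj1 (truth_true _)) in Hx.
  apply (proj2 (truth_true _)). left. exact (lte_lt_trans Hx Hxy).
Qed.

Lemma cut_question x y : lt x y ->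
  exists k, is_question ltI (cut_word x) (cut_word y) k /\
            cut x k = false /\ cut y k = true.
Proof.
  intros Hxy. destruct (e_onto y) as [k0 Hk0].
  assert (differ_k0 : cut x k0 <> cut y k0).
  { unfold cut. rewrite Hk0.
    rewrite (proj2 (truth_false _) (not_lte_of_lt Hxy)).
    rewrite (proj2 (truth_true (lte y y)) (or_intror eq_refl)).
    discriminate. }
  destruct (wf_least (P := fun k => cut x k <> cut y k) ltI_wf differ_k0)
    as [k [Hk Hleast]].
  assert (Hx : cut x k = false).
  { destruct (cut x k) eqn:E; [|reflexivity].
    exfalso. apply Hk. symmetry. exact (cut_monotone Hxy E). }
  assert (Hy : cut y k = true).
  { destruct (cut y k); [reflexivity | exfalso; apply Hk; exact Hx]. }
  exists k. repeat split; try assumption.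
  intros j Hj. apply NNPP, (Hleast j Hj).
Qed.

Lemma next_lt_cut_word x y : next_lt ltI (cut_word x) (cut_word y) <-> lt x y.
Proof.
  split.
  - intros (k & _ & Hx & Hy). simpl in Hx, Hy.
    apply (proj1 (truth_false _)) in Hx. apply (proj1 (truth_true _)) in Hy.
    exact (lt_lte_trans (lt_of_not_lte Hx) Hy).
  - intros Hxy. destruct (cut_question Hxy) as (k & Hq & Hx & Hy).
    exists k. exact (conj Hq (conj Hx Hy)).
Qed.

Lemma cut_word_has_question x y : x <> y ->
  has_question ltI (cut_word x) (cut_word y).
Proof.
  destruct lt_total as [_ lt_tot]. intros Hne.
  destruct (lt_tot x y Hne) as [H | H];
    destruct (cut_question H) as (k & Hq & _).
  - exists k. exact Hq.
  - exists k. exact (is_question_sym Hq).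
Qed.

End CutWords.

Theorem mainTheorem1 (T : Type) (lt : T -> T -> Prop) (I : Type)
  (ltI : I -> I -> Prop) :
  total_order lt ->
  well_order ltI -> initial_ordinal ltI -> equinumerous I T ->
  exists f : T -> word I,
    (forall x, word_in_Next1 ltI (f x)) /\
    (forall x y, lt x y <-> next_lt ltI (f x) (f y)) /\
    (forall x y, x <> y -> has_question ltI (f x) (f y)).
Proof.
  intros lt_total [_ ltI_wf] _ [e [g [_ e_g]]].
  assert (e_onto : forall y, exists k, e k = y)
    by (intro y; exists (g y); apply e_g).
  exists (cut_word lt e). split; [|split].
  - intro x. exists (g x). exact Logic.I.
  - intros x y. symmetry. exact (next_lt_cut_word lt_total ltI_wf e_onto x y).
  - exact (cut_word_has_question lt_total ltI_wf e_onto).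
Qed.
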